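(* Let $G$ be a finite simple graph with at least one edge, and let $\lambda_1$ be the smallest non-zero eigenvalue of its Kirchhoff matrix $K$. Then $\lambda_1\geq 1/(\tau(G)-1)$.
   Context: $K=D-A$ is the Kirchhoff matrix (degree matrix minus adjacency matrix) of $G$. The tree-forest ratio is $\tau(G)={\rm det}(1+K)/{\rm Det}(K)=\prod_{\lambda\neq0}(1+1/\lambda)$, the product over the non-zero eigenvalues of $K$ with multiplicity (${\rm Det}$ denotes the pseudo-determinant, the product of the non-zero eigenvalues). *)

From HB Require Import structures.
From mathcomp Require Import all_boot all_order all_algebra.
From mathcomp Require Import polyrcf.
Set Implicit Arguments. Unset Strict Implicit. Unset Printing Implicit Defensive.
Import Order.TTheory GRing.Theory Num.Theory.
Local Open Scope ring_scope.

Definition simple_graph (n : nat) (e : rel 'I_n) : Prop :=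
  symmetric e /\ irreflexive e.

Definition kirchhoff (R : nzRingType) (n : nat) (e : rel 'I_n) : 'M[R]_n :=
  \matrix_(i, j) ((if i == j then (#|[set k | e i k]|)%:R else 0)
                  - (e i j)%:R).

(* Pseudo-determinant: product of the non-zero eigenvalues of A, counted with
   (algebraic) multiplicity, i.e. of the non-zero roots of the characteristic
   polynomial.  (For the symmetric Kirchhoff matrix the characteristic
   polynomial splits over the real closed field R.) *)
Definition pdet (R : rcfType) (n : nat) (A : 'M[R]_n) : R :=
  \prod_(x <- rootsR (char_poly A) | x != 0) x ^+ mup x (char_poly A).

Definition tau (R : rcfType) (n : nat) (e : rel 'I_n) : R :=
  \det (1%:M + kirchhoff R e) / pdet (kirchhoff R e).

(* The Kirchhoff matrix K is real symmetric, so its characteristic polynomial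
   splits as prod_i (X - l_i) over the reals, and K is positive semidefinite
   because v K v^T = 1/2 sum_(i,j) e_ij (v_i - v_j)^2.  Hence
   det(1 + K) = prod_i (1 + l_i), Det(K) = prod_(l_i <> 0) l_i, and
   tau(G) = prod_(l_i <> 0) (1 + 1/l_i) is a product of factors >= 1, one of
   which is 1 + 1/l_1.  So tau(G) - 1 >= 1/l_1. *)

From mathcomp Require Import all_boot all_order all_algebra.
From mathcomp Require Import polyrcf complex spectral.
From mathcomp Require Import ring.
Set Implicit Arguments. Unset Strict Implicit. Unset Printing Implicit Defensive.
Import Order.TTheory GRing.Theory Num.Theory.
Local Open Scope ring_scope.

Lemma char_poly_similar (F : fieldType) n (P A : 'M[F]_n) : P \in unitmx ->
  char_poly (invmx P *m A *m P) = char_poly A.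
Proof.
move=> Pu.
have PA : P *m (invmx P *m A *m P) = A *m P by rewrite !mulmxA mulmxV // mul1mx.
have E : map_mx polyC P *m char_poly_mx (invmx P *m A *m P)
         = char_poly_mx A *m map_mx polyC P.
  by rewrite /char_poly_mx mulmxBr mulmxBl -map_mxM PA map_mxM scalar_mxC.
move/(congr1 determinant): E; rewrite !det_mulmx [RHS]mulrC => /mulfI; apply.
by rewrite det_map_mx polyC_eq0 -unitfE -unitmxE.
Qed.

(* Through the spectral theorem over R[i], where a real symmetric matrix is hermitian. *)
Lemma char_poly_sym_split (R : rcfType) n (A : 'M[R]_n) : A^T = A ->
  exists s : seq R, char_poly A = \prod_(x <- s) ('X - x%:P).
Proof.
move=> symA; pose AC := map_mx (real_complex R) A.
have AC_herm : AC \is hermsymmx.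
  apply: realsym_hermsym.
    apply/is_hermitianmxP; rewrite expr0 scale1r.
    by rewrite map_mx_id // /AC map_trmx symA.
  by apply/mxOverP => i j; rewrite mxE complex_real.
have /orthomx_spectralP AC_diag := hermitian_normalmx AC_herm.
have diag_real := hermitian_spectral_diag_real AC_herm.
exists [seq complex.Re (spectral_diag AC 0 i) | i <- enum 'I_n].
apply: (@map_poly_inj _ _ (real_complex R)).
rewrite map_char_poly -/AC {1}AC_diag char_poly_similar ?spectral_unit //.
rewrite char_poly_trig ?diag_mx_is_trig // rmorph_prod big_map big_enum /=.
apply: eq_bigr => i _; rewrite map_polyXsubC mxE eqxx mulr1n.
by rewrite /= RRe_real // (mxOverP diag_real).
Qed.

Lemma horner_char_poly (R : comNzRingType) n (A : 'M[R]_n) a :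
  (char_poly A).[a] = \det (a%:M - A).
Proof.
rewrite /char_poly -horner_evalE -det_map_mx; congr (\det _).
apply/matrixP => i j.
by rewrite !mxE /= horner_evalE hornerD hornerN hornerMn hornerX hornerC.
Qed.

Lemma det_add1mx (R : comNzRingType) n (A : 'M[R]_n) :
  \det (1%:M + A) = (-1) ^+ n * (char_poly A).[-1].
Proof.
by rewrite horner_char_poly raddfN /= -opprD -scaleN1r detZ signrMK.
Qed.

Lemma horner_prod_XsubC_N1 (R : comNzRingType) (s : seq R) :
  (\prod_(x <- s) ('X - x%:P)).[-1] = (-1) ^+ size s * \prod_(x <- s) (1 + x).
Proof.
elim: s => [|y s IH]; first by rewrite !big_nil hornerC expr0 mul1r.
by rewrite !big_cons hornerM IH hornerXsubC /= exprS; ring.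
Qed.

Lemma det_add1mx_split (R : comNzRingType) n (A : 'M[R]_n) (s : seq R) :
  char_poly A = \prod_(x <- s) ('X - x%:P) ->
  \det (1%:M + A) = \prod_(x <- s) (1 + x).
Proof.
move=> As; have sz : size s = n.
  by have := size_char_poly A; rewrite As size_prod_XsubC; case.
by rewrite det_add1mx As horner_prod_XsubC_N1 sz signrMK.
Qed.

Lemma pdet_split (R : rcfType) n (A : 'M[R]_n) (s : seq R) :
  char_poly A = \prod_(x <- s) ('X - x%:P) ->
  pdet A = \prod_(x <- s | x != 0) x.
Proof.
move=> As; rewrite /pdet As.
have p0 : \prod_(x <- s) ('X - x%:P) != 0 := monic_neq0 (monic_prod_XsubC _ _ _).
rewrite (@perm_big _ _ _ _ _ (undup s)); last first.
  apply: uniq_perm; [exact: lt_sorted_uniq (sorted_roots _ _ _)|exact: undup_uniq|].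
  move=> x; rewrite mem_undup -[x \in s]root_prod_XsubC -(roots_on_rootsR p0 x).
  by rewrite in_itv.
under eq_bigr => x _ do rewrite mu_prod_XsubC.
exact: big_undup_iterop_count.
Qed.

Section Kirchhoff.
Variables (R : realFieldType) (n : nat) (e : rel 'I_n).
Hypothesis e_sym : symmetric e.
Local Notation K := (kirchhoff R e).

Lemma kirchhoff_sym : K^T = K.
Proof.
apply/matrixP => i j; rewrite !mxE eq_sym.
by case: eqP => [->|_] //; rewrite e_sym.
Qed.

Lemma degree_sum i : (#|[set k | e i k]|%:R : R) = \sum_k (e i k)%:R.
Proof.
rewrite -sum1_card natr_sum big_mkcond /=; apply: eq_bigr => k _.
by rewrite inE; case: (e i k).
Qed.

Lemma mulmx_kirchhoff (v : 'rV[R]_n) j :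
  (v *m K) 0 j = \sum_i (e i j)%:R * (v 0 j - v 0 i).
Proof.
rewrite mxE; under eq_bigr => i _ do rewrite mxE mulrBr.
rewrite sumrB (bigD1 j) //= eqxx big1 => [|i /negbTE ->]; last by rewrite mulr0.
rewrite addr0 degree_sum mulr_sumr -sumrB; apply: eq_bigr => i _.
by rewrite e_sym mulrBr mulrC [v 0 i * _]mulrC.
Qed.

Lemma kirchhoff_form (v : 'rV[R]_n) :
  (\sum_j (v *m K) 0 j * v 0 j) *+ 2
  = \sum_j \sum_i (e i j)%:R * (v 0 j - v 0 i) ^+ 2.
Proof.
pose S := \sum_j \sum_i (e i j)%:R * (v 0 j - v 0 i) * v 0 j.
have -> : \sum_j (v *m K) 0 j * v 0 j = S.
  by apply: eq_bigr => j _; rewrite mulmx_kirchhoff mulr_suml.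
have S_swap : S = \sum_j \sum_i (e i j)%:R * (v 0 i - v 0 j) * v 0 i.
  rewrite /S exchange_big /=; apply: eq_bigr => j _; apply: eq_bigr => i _.
  by rewrite e_sym.
rewrite mulr2n {1}S_swap /S -big_split /=; apply: eq_bigr => j _.
by rewrite -big_split /=; apply: eq_bigr => i _; ring.
Qed.

Lemma kirchhoff_eigenvalue_ge0 x : eigenvalue K x -> 0 <= x.
Proof.
case/eigenvalueP => v vK v_neq0.
have norm_gt0 : 0 < \sum_j v 0 j ^+ 2.
  have [j vj] : exists j, v 0 j != 0.
    apply/existsP; apply: contraNT v_neq0; rewrite negb_exists => /forallP vj0.
    by apply/eqP/rowP => j; rewrite mxE; apply/eqP; rewrite -[_ == _]negbK vj0.
  rewrite (bigD1 j) //= ltr_pwDl ?exprn_even_gt0 //.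
  by rewrite sumr_ge0 // => k _; rewrite sqr_ge0.
have : 0 <= (x * \sum_j v 0 j ^+ 2) *+ 2.
  rewrite mulr_sumr.
  have -> : \sum_j x * v 0 j ^+ 2 = \sum_j (v *m K) 0 j * v 0 j.
    by apply: eq_bigr => j _; rewrite vK mxE mulrA.
  rewrite kirchhoff_form; apply: sumr_ge0 => j _; apply: sumr_ge0 => i _.
  by rewrite mulr_ge0 ?ler0n ?sqr_ge0.
by rewrite pmulrn_lge0 // pmulr_lge0.
Qed.

End Kirchhoff.

Lemma prod_add1_pdiv (F : fieldType) (s : seq F) :
  (\prod_(x <- s) (1 + x)) / \prod_(x <- s | x != 0) x
  = \prod_(x <- s | x != 0) (1 + x^-1).
Proof.
elim: s => [|y s IH]; first by rewrite !big_nil divr1.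
rewrite !big_cons -IH; case: eqP => [->|/eqP y0] /=; first by rewrite addr0 !mul1r.
by rewrite invfM mulrACA mulrDl divff // mul1r addrC.
Qed.

Lemma ler_add1V_prod (R : realFieldType) (s : seq R) (l : R) :
  {in s, forall x, 0 <= x} -> l \in s -> l != 0 ->
  1 + l^-1 <= \prod_(x <- s | x != 0) (1 + x^-1).
Proof.
move=> s_ge0 ls l0; rewrite (big_rem l) //= l0.
have ge1 x : x \in s -> 1 <= 1 + x^-1 by move/s_ge0; rewrite lerDl invr_ge0.
rewrite ler_peMr ?(le_trans ler01) ?ge1 //.
rewrite big_seq_cond; apply: (big_ind (fun y => 1 <= y)) => //; first exact: mulr_ege1.
by move=> x /andP[/mem_rem /ge1].
Qed.

Theorem mainTheorem4 (R : rcfType) (n : nat) (e : rel 'I_n)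
  (Hg : simple_graph e) (Hedge : exists i j, e i j)
  (l1 : R)
  (Hl1 : eigenvalue (kirchhoff R e) l1) (Hl1nz : l1 != 0)
  (Hl1min : forall mu : R, eigenvalue (kirchhoff R e) mu -> mu != 0 -> l1 <= mu) :
  1 / (tau R e - 1) <= l1.
Proof.
case: Hg => e_sym _.
have [s Ks] := char_poly_sym_split (kirchhoff_sym R e_sym).
have s_ge0 : {in s, forall x, 0 <= x}.
  move=> x xs; apply: (kirchhoff_eigenvalue_ge0 e_sym).
  by rewrite eigenvalue_root_char Ks root_prod_XsubC.
have l1s : l1 \in s by rewrite -root_prod_XsubC -Ks -eigenvalue_root_char.
have l1_gt0 : 0 < l1 by rewrite lt0r Hl1nz s_ge0.
have := ler_add1V_prod s_ge0 l1s Hl1nz.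
rewrite -prod_add1_pdiv -(det_add1mx_split Ks) -(pdet_split Ks) -/(tau R e).
rewrite -lerBrDl => tau_ge.
have l1V_gt0 : 0 < l1^-1 by rewrite invr_gt0.
by rewrite div1r -[leRHS]invrK lef_pV2 ?posrE // (lt_le_trans l1V_gt0).
Qed.
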